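(* Let $0\le\beta\le1$ and $f\in\mathcal{A}_{\beta}$ with $f(z)=z+\sum_{n=2}^{\infty}a_nz^n$, and let $\gamma_1=\frac12a_2$ and $\gamma_2=\frac12\left(a_3-\frac12a_2^2\right)$ be its first two logarithmic coefficients. Then $$-\frac{1}{\sqrt{5-6\beta+2\beta^2}}\le|\gamma_2|-|\gamma_1|\le\frac{1}{3-2\beta}.$$ Both inequalities are sharp.
   Context: $\mathbb{D}=\{z\in\mathbb{C}:|z|<1\}$. For $\beta\in[0,1]$, $\mathcal{A}_{\beta}$ is the set of analytic functions $f$ on $\mathbb{D}$ with $f(0)=0$, $f'(0)=1$ (so $f(z)=z+\sum_{n\ge2}a_nz^n$) such that $\operatorname{Re}\big(\beta f(z)/z+(1-\beta)f'(z)\big)>0$ for all $z\in\mathbb{D}$. The logarithmic coefficients $\gamma_n$ are defined by $\log\frac{f(z)}{z}=2\sum_{n\ge1}\gamma_nz^n$ near $0$ (with $\log1=0$), which gives $\gamma_1=a_2/2$, $\gamma_2=\frac12(a_3-\frac12a_2^2)$. Sharpness: the upper bound is attained by $f$ with $\beta f(z)/z+(1-\beta)f'(z)=\frac{1+z^2}{1-z^2}$, the lower bound by $f$ with $\beta f(z)/z+(1-\beta)f'(z)=\frac{1-z^2}{1-\frac{2(2-\beta)}{\sqrt{5-6\beta+2\beta^2}}z+z^2}$. *)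

From Stdlib Require Import Reals.
From Coquelicot Require Import Coquelicot.
Open Scope R_scope.

Definition in_disk (z : C) : Prop := Cmod z < 1.

(* [in_A beta f a]: f is analytic on the unit disk with Taylor expansion
   f(z) = sum_n a_n z^n (a_0 = 0, a_1 = 1), and
   Re(beta f(z)/z + (1-beta) f'(z)) > 0 on the disk, where f' is the
   complex derivative.  (At z = 0 the expression equals 1 > 0 automatically,
   since f(z)/z -> a_1 = 1 and f'(0) = a_1 = 1.) *)
Definition in_A (beta : R) (f : C -> C) (a : nat -> C) : Prop :=
  a 0%nat = 0%C /\ a 1%nat = 1%C /\
  (forall z : C, in_disk z -> is_pseries a z (f z)) /\
  (forall z : C, in_disk z -> z <> 0%C ->
     exists df : C, is_derive (K := C_AbsRing) (V := C_NormedModule) f z df /\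
       0 < Re (RtoC beta * (f z / z) + RtoC (1 - beta) * df)%C).

(* First two logarithmic coefficients, log(f(z)/z) = 2 sum gamma_n z^n. *)
Definition gamma1 (a : nat -> C) : C := (a 2%nat / 2)%C.
Definition gamma2 (a : nat -> C) : C := ((a 3%nat - a 2%nat * a 2%nat / 2) / 2)%C.

(* With [p(z) = beta f(z)/z + (1 - beta) f'(z) = sum_m c_m z^m], where
   [c_m = (1 + (1 - beta) m) a_(m+1)], [p] has positive real part and [p(0) = 1].
   Averaging [p(r w) |v_0 + v_1 w + v_2 w^2|^2 >= 0] over the [N]-th roots of unity [w]
   and letting [N -> oo] shows that the Toeplitz form of [1, c_1 r, c_2 r^2] is positive
   semidefinite; a suitable test vector turns this into
   [|c_2 - c_1^2/2| <= 2 - |c_1|^2/2] (after [r -> 1]).  As [gamma_1 = a_2/2] and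
   [gamma_2 = (c_2 - c_1^2/2) / (2 (3 - 2 beta)) + (1 - beta)^2 a_2^2 / (4 (3 - 2 beta))],
   both bounds become inequalities in the single variable [|a_2|].  Equality holds for
   [p(z) = 1/(1 - u z) + 1/(1 - v z) - 1] with [u = 1, v = -1] (upper bound) and with
   [u, v = x +- i sqrt (1 - x^2)], [x = (2 - beta) / sqrt (5 - 6 beta + 2 beta^2)]
   (lower bound). *)

From Stdlib Require Import Reals Lra Lia Psatz ClassicalEpsilon.
From Coquelicot Require Import Coquelicot.
Open Scope R_scope.

Ltac Cring :=
  repeat match goal with
  | |- context [@plus ?G ?x ?y] => change (@plus G x y) with (Cplus x y)
  | |- context [@opp ?G ?x] => change (@opp G x) with (Copp x)
  | |- context [@scal ?K ?V ?x ?y] => change (@scal K V x y) with (Cmult x y)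
  end;
  match goal with |- ?x = ?y => change (@eq C x y); ring end.

(** * Series in [C] *)

Lemma pow_n_Cpow (x : C) (n : nat) : @pow_n C_AbsRing x n = (x ^ n)%C.
Proof. induction n; simpl; auto. Qed.

Lemma is_pseries_C (a : nat -> C) (z l : C) :
  is_pseries a z l <-> is_series (fun n => (z ^ n * a n)%C) l.
Proof.
  unfold is_pseries.
  split; apply (is_series_ext (K := C_AbsRing) (V := C_NormedModule));
    intros n; rewrite <- (pow_n_Cpow z n); reflexivity.
Qed.

Lemma is_series_Cmod_le (x : nat -> C) (b : nat -> R) (l : C) (L : R) :
  is_series x l -> is_series b L -> (forall n, Cmod (x n) <= b n) -> Cmod l <= L.
Proof.
  intros Hx Hb Hle.
  assert (Hnorm : is_lim_seq (fun n => Cmod (sum_n x n)) (Cmod l)).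
  { eapply filterlim_comp; [exact Hx | exact (filterlim_norm (V := C_NormedModule) l)]. }
  assert (Hpartial : forall n, Cmod (sum_n x n) <= sum_n b n).
  { intros n. eapply Rle_trans; [exact (norm_sum_n_m (V := C_NormedModule) x 0 n) |].
    apply sum_n_m_le. exact Hle. }
  exact (is_lim_seq_le _ _ _ _ Hpartial Hnorm (Hb : is_lim_seq (sum_n b) L)).
Qed.

Lemma is_series_C_unique (x : nat -> C) (l1 l2 : C) :
  is_series x l1 -> is_series x l2 -> l1 = l2.
Proof. apply filterlim_locally_unique. Qed.

Lemma ex_series_terms_bounded {K : AbsRing} {V : NormedModule K} (x : nat -> V) :
  ex_series x -> exists M, forall n, norm (x n) <= M.
Proof.
  intros [l Hl].
  destruct (filterlim_bounded (sum_n x)) as [M HM]; [exists l; exact Hl |].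
  exists (2 * M). intros n.
  assert (HM0 : 0 <= M) by (eapply Rle_trans; [apply (norm_ge_0 (V := V)) | apply (HM 0%nat)]).
  destruct n as [|n].
  - pose proof (HM 0%nat) as H0. rewrite sum_O in H0. lra.
  - assert (Hx : x (S n) = minus (sum_n x (S n)) (sum_n x n)).
    { unfold minus. rewrite sum_Sn, (plus_comm (plus _ _)), plus_assoc, plus_opp_l.
      now rewrite plus_zero_l. }
    rewrite Hx. eapply Rle_trans; [apply norm_triangle |].
    rewrite norm_opp. pose proof (HM n). pose proof (HM (S n)). lra.
Qed.

Lemma is_series_finite {K : AbsRing} {V : NormedModule K} (x : nat -> V) (n0 : nat) :
  (forall m, (n0 < m)%nat -> x m = zero) -> is_series x (sum_n x n0).
Proof.
  intros Hx. apply filterlim_ext_loc with (f := fun _ => sum_n x n0).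
  - exists n0. intros n Hn. induction Hn as [|n Hn IH]; [reflexivity |].
    rewrite IH, sum_Sn, Hx by lia. now rewrite plus_zero_r.
  - apply filterlim_const.
Qed.

Lemma is_series_sum_n {K : AbsRing} {V : NormedModule K}
    (x : nat -> nat -> V) (l : nat -> V) (n : nat) :
  (forall k, is_series (x k) (l k)) ->
  is_series (fun m => sum_n (fun k => x k m) n) (sum_n l n).
Proof.
  intros Hx. induction n as [|n IH].
  - rewrite sum_O. apply (is_series_ext (x 0%nat)); [intros m; now rewrite sum_O | apply Hx].
  - rewrite sum_Sn. apply (is_series_ext (fun m => plus (sum_n (fun k => x k m) n) (x (S n) m))).
    + intros m. now rewrite sum_Sn.
    + now apply is_series_plus.
Qed.

Lemma Cgeom_sum (q : C) (n : nat) : ((q - 1) * sum_n (fun k => q ^ k) n = q ^ S n - 1)%C.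
Proof.
  induction n as [|n IH].
  - rewrite sum_O. simpl. ring.
  - rewrite sum_Sn. change (plus ?u ?v) with (Cplus u v).
    rewrite Cmult_plus_distr_l, IH, (Cpow_S q (S n)). ring.
Qed.

Lemma is_series_Cgeom (q : C) : Cmod q < 1 -> is_series (fun n => (q ^ n)%C) (/ (1 - q))%C.
Proof.
  intros Hq.
  assert (Hq1 : (1 - q)%C <> 0%C).
  { intros E. assert (q = 1%C) by (replace q with (1 - (1 - q))%C by ring; rewrite E; ring).
    subst q. rewrite Cmod_1 in Hq. lra. }
  assert (Hd : 0 < Cmod (1 - q)%C) by (apply Cmod_gt_0; auto).
  apply filterlim_locally. intros eps.
  assert (Hpos : 0 < eps * Cmod (1 - q)%C) by (apply Rmult_lt_0_compat; [apply cond_pos | auto]).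
  destruct (pow_lt_1_zero (Cmod q) ltac:(rewrite Rabs_pos_eq; [lra | apply Cmod_ge_0]) _ Hpos)
    as [N HN].
  exists N. intros n Hn. apply C_NormedModule_mixin_compat1.
  change (Cmod (sum_n (fun n => (q ^ n)%C) n - / (1 - q))%C < eps).
  assert (E : (sum_n (fun n => (q ^ n)%C) n - / (1 - q) = - q ^ S n / (1 - q))%C).
  { assert (Hq1' : (q - 1)%C <> 0%C).
    { intros E. apply Hq1. replace (1 - q)%C with (- (q - 1))%C by ring. rewrite E. ring. }
    assert (Hsolve : forall s : C, ((q - 1) * s = q ^ S n - 1)%C -> s = ((q ^ S n - 1) / (q - 1))%C).
    { intros s Hs. rewrite <- Hs. field. exact Hq1'. }
    rewrite (Hsolve _ (Cgeom_sum q n)). field. split; assumption. }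
  rewrite E. unfold Cdiv. rewrite Cmod_mult, Cmod_opp, Cmod_inv, Cmod_pow by auto.
  pose proof (HN (S n) ltac:(lia)) as H. rewrite Rabs_pos_eq in H by (apply pow_le, Cmod_ge_0).
  apply Rmult_lt_reg_r with (Cmod (1 - q)%C); auto.
  rewrite Rmult_assoc, Rinv_l by lra. lra.
Qed.

(** * Termwise differentiation of complex power series *)

Lemma ex_series_sqr_geom (q : R) : 0 < q < 1 -> ex_series (fun n => (INR n + 1) ^ 2 * q ^ n).
Proof.
  intros Hq.
  assert (Hpos : forall n, 0 < (INR n + 1) ^ 2 * q ^ n).
  { intros n. pose proof (pos_INR n). apply Rmult_lt_0_compat; apply pow_lt; lra. }
  assert (Hinv : is_lim_seq (fun n => / (INR n + 1)) 0).
  { assert (H : is_lim_seq (fun n => INR n + 1) p_infty).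
    { apply is_lim_seq_ext with (u := fun n => INR (S n)); [intros n; apply S_INR |].
      apply (is_lim_seq_incr_1 INR p_infty), is_lim_seq_INR. }
    apply (is_lim_seq_inv _ _ H). discriminate. }
  assert (Hratio : is_lim_seq
      (fun n => Rabs ((INR (S n) + 1) ^ 2 * q ^ S n / ((INR n + 1) ^ 2 * q ^ n))) q).
  { apply is_lim_seq_ext with (u := fun n => (1 + / (INR n + 1)) * (1 + / (INR n + 1)) * q).
    - intros n. rewrite Rabs_pos_eq.
      + rewrite S_INR. pose proof (pos_INR n). assert (0 < q ^ n) by (apply pow_lt; lra).
        simpl. field. split; lra.
      + apply Rlt_le, Rdiv_lt_0_compat; apply Hpos.
    - assert (Hlim : is_lim_seq (fun n => (1 + / (INR n + 1)) * (1 + / (INR n + 1)) * q)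
                         ((1 + 0) * (1 + 0) * q)).
      { apply is_lim_seq_mult'; [apply is_lim_seq_mult' | apply is_lim_seq_const];
          apply is_lim_seq_plus'; auto using is_lim_seq_const. }
      now replace ((1 + 0) * (1 + 0) * q) with q in Hlim by ring. }
  apply (ex_series_ext (fun n => Rabs ((INR n + 1) ^ 2 * q ^ n))).
  - intros n. apply Rabs_pos_eq, Rlt_le, Hpos.
  - apply (ex_series_DAlembert _ q (proj2 Hq)); [intros n; apply Rgt_not_eq, Hpos | exact Hratio].
Qed.

(* The truncated [n - 1] is harmless: at [n = 0] the factor [INR n] vanishes. *)
Lemma Cpow_diff_bounds (z y : C) (rho : R) :
  0 < rho -> Cmod z <= rho -> Cmod y <= rho ->
  forall n : nat,
    rho * Cmod (y ^ n - z ^ n)%C <= INR n * Cmod (y - z) * rho ^ n /\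
    rho ^ 2 * Cmod (y ^ n - z ^ n - INR n * (y - z) * z ^ (n - 1))%C
      <= INR n ^ 2 * Cmod (y - z) ^ 2 * rho ^ n.
Proof.
  intros Hr Hz Hy. set (h := (y - z)%C).
  assert (Hh : 0 <= Cmod h) by apply Cmod_ge_0.
  induction n as [|n [IH1 IH2]].
  - simpl.
    replace (1 - 1 - RtoC 0 * h * 1)%C with (RtoC 0) by (apply injective_projections; simpl; ring).
    replace (1 - 1)%C with (RtoC 0) by (apply injective_projections; simpl; ring).
    rewrite Cmod_0. lra.
  - set (d := (y ^ n - z ^ n)%C) in *.
    set (e := (d - INR n * h * z ^ (n - 1))%C) in *.
    assert (Hd : (y ^ S n - z ^ S n = y * d + h * z ^ n)%C) by (unfold d, h; simpl; ring).
    assert (He : (y ^ S n - z ^ S n - INR (S n) * h * z ^ (S n - 1) = z * e + h * d)%C).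
    { unfold e, d, h. rewrite S_INR, RtoC_plus. replace (S n - 1)%nat with n by lia.
      destruct n as [|m]; [simpl; ring |].
      replace (S m - 1)%nat with m by lia. simpl. ring. }
    assert (Hzn : Cmod (z ^ n) <= rho ^ n).
    { rewrite Cmod_pow. apply pow_incr. split; [apply Cmod_ge_0 | exact Hz]. }
    assert (T1 : Cmod (y * d + h * z ^ n)%C <= Cmod y * Cmod d + Cmod h * Cmod (z ^ n)).
    { rewrite <- !Cmod_mult. apply Cmod_triangle. }
    assert (T2 : Cmod (z * e + h * d)%C <= Cmod z * Cmod e + Cmod h * Cmod d).
    { rewrite <- !Cmod_mult. apply Cmod_triangle. }
    pose proof (Cmod_ge_0 d). pose proof (Cmod_ge_0 e). pose proof (pos_INR n).
    assert (0 <= rho ^ n) by (apply pow_le; lra).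
    assert (P1 : Cmod y * (rho * Cmod d) <= rho * (INR n * Cmod h * rho ^ n)).
    { apply Rmult_le_compat; auto using Cmod_ge_0; nra. }
    assert (P2 : Cmod z * (rho ^ 2 * Cmod e) <= rho * (INR n ^ 2 * Cmod h ^ 2 * rho ^ n)).
    { apply Rmult_le_compat; auto using Cmod_ge_0; nra. }
    assert (P3 : Cmod h * (rho * Cmod d) <= Cmod h * (INR n * Cmod h * rho ^ n)).
    { apply Rmult_le_compat_l; auto. }
    assert (P4 : Cmod h * Cmod (z ^ n) <= Cmod h * rho ^ n) by (apply Rmult_le_compat_l; auto).
    apply (Rmult_le_compat_l rho) in T1; [| lra].
    apply (Rmult_le_compat_l (rho ^ 2)) in T2; [| nra].
    rewrite He, Hd, S_INR. change (rho ^ S n) with (rho * rho ^ n).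
    assert (P5 : rho * (Cmod h * (rho * Cmod d)) <= rho * (Cmod h * (INR n * Cmod h * rho ^ n))).
    { apply Rmult_le_compat_l; lra. }
    assert (0 <= (INR n + 1) * Cmod h ^ 2 * (rho * rho ^ n)).
    { apply Rmult_le_pos; [apply Rmult_le_pos |]; nra. }
    split; nra.
Qed.

Section ComplexPowerSeries.

Variables (a : nat -> C) (f : C -> C).
Hypothesis f_pseries : forall z, Cmod z < 1 -> is_pseries a z (f z).

Lemma pseries_coef_geom_bound (r : R) : 0 < r < 1 ->
  exists M q, 0 <= M /\ 0 < q < 1 /\ forall n, Cmod (a n) * r ^ n <= M * q ^ n.
Proof.
  intros Hr. set (r' := (1 + r) / 2).
  assert (Hr' : r < r' < 1) by (unfold r'; lra).
  assert (Hs : is_series (fun n => (RtoC r' ^ n * a n)%C) (f (RtoC r'))).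
  { apply is_pseries_C, f_pseries. rewrite Cmod_R, Rabs_pos_eq; lra. }
  destruct (ex_series_terms_bounded _ (ex_intro _ _ Hs)) as [M HM].
  exists M, (r / r'). repeat split.
  - eapply Rle_trans; [apply (norm_ge_0 (V := C_NormedModule)) | apply (HM 0%nat)].
  - apply Rdiv_lt_0_compat; lra.
  - apply Rlt_div_l; lra.
  - intros n. specialize (HM n). change (norm ?x) with (Cmod x) in HM.
    rewrite Cmod_mult, Cmod_pow, Cmod_R, Rabs_pos_eq in HM by lra.
    assert (0 < r' ^ n) by (apply pow_lt; lra).
    assert (0 <= r ^ n) by (apply pow_le; lra).
    unfold Rdiv. rewrite Rpow_mult_distr, pow_inv.
    apply Rmult_le_reg_r with (r' ^ n); [assumption |].
    replace (M * (r ^ n * / r' ^ n) * r' ^ n) with (M * r ^ n) by (field; lra).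
    replace (Cmod (a n) * r ^ n * r' ^ n) with ((r' ^ n * Cmod (a n)) * r ^ n) by ring.
    apply Rmult_le_compat_r; assumption.
Qed.

Lemma ex_series_pseries_sqr_weighted (rho : R) : 0 < rho < 1 ->
  ex_series (fun n => (INR n + 1) ^ 2 * Cmod (a n) * rho ^ n).
Proof.
  intros Hrho. destruct (pseries_coef_geom_bound rho Hrho) as (M & q & HM & Hq & Hb).
  apply (ex_series_le (K := R_AbsRing) (V := R_CompleteNormedModule) _
           (fun n => M * ((INR n + 1) ^ 2 * q ^ n))).
  - intros n. change (norm ?x) with (Rabs x). specialize (Hb n).
    pose proof (pos_INR n). pose proof (Cmod_ge_0 (a n)).
    assert (0 <= rho ^ n) by (apply pow_le; lra).
    rewrite Rabs_pos_eq by (apply Rmult_le_pos; [apply Rmult_le_pos |]; nra).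
    replace ((INR n + 1) ^ 2 * Cmod (a n) * rho ^ n) with ((INR n + 1) ^ 2 * (Cmod (a n) * rho ^ n))
      by ring.
    replace (M * ((INR n + 1) ^ 2 * q ^ n)) with ((INR n + 1) ^ 2 * (M * q ^ n)) by ring.
    apply Rmult_le_compat_l; [nra | exact Hb].
  - apply (ex_series_scal_l (K := R_AbsRing) (V := R_NormedModule)), ex_series_sqr_geom, Hq.
Qed.

Lemma pseries_deriv_coef_geom_bound (r : R) : 0 < r < 1 ->
  exists K s, 0 <= K /\ 0 <= s < 1 /\
    forall m, INR (S m) * Cmod (a (S m)) * r ^ m <= K * s ^ m.
Proof.
  intros Hr. set (rho := (1 + r) / 2).
  assert (Hrho : r < rho < 1) by (unfold rho; lra).
  destruct (ex_series_terms_bounded _ (ex_series_pseries_sqr_weighted rho ltac:(lra)))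
    as [B HB].
  assert (HB0 : 0 <= B) by (eapply Rle_trans; [apply Rabs_pos | apply (HB 0%nat)]).
  exists (B / rho), (r / rho). repeat split.
  - apply Rdiv_le_0_compat; lra.
  - apply Rdiv_le_0_compat; lra.
  - apply Rlt_div_l; lra.
  - intros m. specialize (HB (S m)). change (norm ?x) with (Rabs x) in HB.
    rewrite Rabs_pos_eq in HB.
    2:{ pose proof (pos_INR (S m)). pose proof (Cmod_ge_0 (a (S m))).
        apply Rmult_le_pos; [apply Rmult_le_pos |]; [nra | lra | apply pow_le; lra]. }
    pose proof (pos_INR (S m)). pose proof (Cmod_ge_0 (a (S m))).
    assert (0 < rho ^ m) by (apply pow_lt; lra).
    assert (0 <= r ^ m) by (apply pow_le; lra).
    unfold Rdiv. rewrite Rpow_mult_distr, pow_inv.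
    apply Rmult_le_reg_r with (rho * rho ^ m); [nra |].
    replace (B * / rho * (r ^ m * / rho ^ m) * (rho * rho ^ m)) with (B * r ^ m)
      by (field; split; lra).
    apply Rle_trans with (((INR (S m) + 1) ^ 2 * Cmod (a (S m)) * rho ^ S m) * r ^ m).
    + change (rho ^ S m) with (rho * rho ^ m).
      replace (INR (S m) * Cmod (a (S m)) * r ^ m * (rho * rho ^ m))
        with (INR (S m) * Cmod (a (S m)) * (r ^ m * (rho * rho ^ m))) by ring.
      replace ((INR (S m) + 1) ^ 2 * Cmod (a (S m)) * (rho * rho ^ m) * r ^ m)
        with ((INR (S m) + 1) ^ 2 * Cmod (a (S m)) * (r ^ m * (rho * rho ^ m))) by ring.
      apply Rmult_le_compat_r; [apply Rmult_le_pos; [lra | apply Rmult_le_pos; lra] |].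
      apply Rmult_le_compat_r; nra.
    + apply Rmult_le_compat_r; assumption.
Qed.

Lemma ex_series_pseries_deriv (z : C) : Cmod z < 1 ->
  ex_series (fun n => INR (S n) * a (S n) * z ^ n)%C.
Proof.
  intros Hz. pose proof (Cmod_ge_0 z).
  set (rho := (1 + Cmod z) / 2).
  assert (Hrho : 0 < rho < 1) by (unfold rho; lra).
  apply (ex_series_le (K := C_AbsRing) (V := C_CompleteNormedModule) _
           (fun n => / rho * ((INR (S n) + 1) ^ 2 * Cmod (a (S n)) * rho ^ S n))).
  - intros n. change (norm ?x) with (Cmod x).
    rewrite !Cmod_mult, Cmod_pow, Cmod_R, Rabs_pos_eq by apply pos_INR.
    pose proof (pos_INR (S n)). pose proof (Cmod_ge_0 (a (S n))).
    assert (Hzn : Cmod z ^ n <= rho ^ n) by (apply pow_incr; unfold rho; lra).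
    assert (0 <= rho ^ n) by (apply pow_le; lra).
    replace (/ rho * ((INR (S n) + 1) ^ 2 * Cmod (a (S n)) * rho ^ S n))
      with ((INR (S n) + 1) ^ 2 * Cmod (a (S n)) * rho ^ n) by (simpl; field; lra).
    apply Rmult_le_compat; [nra | apply pow_le, Cmod_ge_0 | | exact Hzn].
    apply Rmult_le_compat_r; nra.
  - apply (ex_series_scal_l (K := R_AbsRing) (V := R_NormedModule)).
    apply (ex_series_incr_1 (K := R_AbsRing) (V := R_NormedModule)
             (fun n => (INR n + 1) ^ 2 * Cmod (a n) * rho ^ n)).
    apply ex_series_pseries_sqr_weighted, Hrho.
Qed.

Lemma pseries_remainder_bound (rho : R) : 0 < rho < 1 ->
  exists K, forall z y g, Cmod z <= rho -> Cmod y <= rho ->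
    is_series (fun n => INR (S n) * a (S n) * z ^ n)%C g ->
    Cmod (f y - f z - (y - z) * g)%C <= K * Cmod (y - z) ^ 2.
Proof.
  intros Hrho. destruct (ex_series_pseries_sqr_weighted rho Hrho) as [W HW].
  exists (W / rho ^ 2). intros z y g Hz Hy Hg.
  set (T := fun n => (INR n * a n * z ^ (n - 1))%C).
  assert (HT : is_series T g).
  { apply is_series_decr_1.
    assert (E : (g - T 0%nat)%C = g) by (unfold T; simpl; ring).
    change (is_series (fun n => T (S n)) (g - T 0%nat)%C). rewrite E.
    refine (is_series_ext (K := C_AbsRing) (V := C_NormedModule) _ _ _ _ Hg).
    intros n. unfold T. now replace (S n - 1)%nat with n by lia. }
  assert (Hfy : is_series (fun n => (y ^ n * a n)%C) (f y)).
  { apply is_pseries_C, f_pseries. lra. }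
  assert (Hfz : is_series (fun n => (z ^ n * a n)%C) (f z)).
  { apply is_pseries_C, f_pseries. lra. }
  assert (Hrem : is_series (fun n => (y ^ n * a n - z ^ n * a n - (y - z) * T n)%C)
                   (f y - f z - (y - z) * g)%C).
  { apply (is_series_minus (K := C_AbsRing) (V := C_NormedModule));
      [apply (is_series_minus (K := C_AbsRing) (V := C_NormedModule)) |
       apply (is_series_scal_l (K := C_AbsRing) (V := C_NormedModule))]; assumption. }
  set (hh := Cmod (y - z)).
  replace (W / rho ^ 2 * hh ^ 2) with (hh ^ 2 / rho ^ 2 * W) by (field; lra).
  apply (is_series_Cmod_le _ _ _ _ Hrem
           (is_series_scal_l (K := R_AbsRing) (V := R_NormedModule) (hh ^ 2 / rho ^ 2) _ _ HW)).
  intros n. unfold T.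
  replace (y ^ n * a n - z ^ n * a n - (y - z) * (INR n * a n * z ^ (n - 1)))%C
    with (a n * (y ^ n - z ^ n - INR n * (y - z) * z ^ (n - 1)))%C by ring.
  rewrite Cmod_mult.
  destruct (Cpow_diff_bounds z y rho ltac:(lra) Hz Hy n) as [_ Hn].
  fold hh in Hn. change (scal ?u ?v) with (u * v).
  pose proof (Cmod_ge_0 (a n)). pose proof (pos_INR n).
  assert (0 <= rho ^ n) by (apply pow_le; lra).
  assert (Hr2 : 0 < rho ^ 2) by nra.
  apply Rmult_le_reg_l with (rho ^ 2); [exact Hr2 |].
  replace (rho ^ 2 * (hh ^ 2 / rho ^ 2 * ((INR n + 1) ^ 2 * Cmod (a n) * rho ^ n)))
    with (Cmod (a n) * ((INR n + 1) ^ 2 * hh ^ 2 * rho ^ n)) by (field; lra).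
  rewrite <- Rmult_assoc, (Rmult_comm (rho ^ 2)), Rmult_assoc.
  apply Rmult_le_compat_l; [assumption |]. eapply Rle_trans; [exact Hn |].
  apply Rmult_le_compat_r; [assumption |]. apply Rmult_le_compat_r; nra.
Qed.

Lemma is_derive_pseries (z g : C) : Cmod z < 1 ->
  is_series (fun n => INR (S n) * a (S n) * z ^ n)%C g ->
  is_derive (K := C_AbsRing) (V := C_NormedModule) f z g.
Proof.
  intros Hz Hg. pose proof (Cmod_ge_0 z).
  set (rho := (1 + Cmod z) / 2).
  assert (Hrho : 0 < rho < 1) by (unfold rho; lra).
  destruct (pseries_remainder_bound rho Hrho) as [K HK].
  split; [apply is_linear_scal_l |].
  intros x Hx.
  apply (is_filter_lim_locally_unique (K := C_AbsRing) (V := AbsRing_NormedModule C_AbsRing))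
    in Hx. subst x.
  intros eps. pose proof (cond_pos eps).
  set (delta := Rmin (rho - Cmod z) (eps / (Rabs K + 1))).
  assert (Hdelta : 0 < delta).
  { apply Rmin_case; [unfold rho; lra |]. apply Rdiv_lt_0_compat; [lra |].
    pose proof (Rabs_pos K). lra. }
  exists (mkposreal delta Hdelta). intros y Hy. change (Cmod (y - z) < delta) in Hy.
  change (Cmod (f y - f z - (y - z) * g)%C <= eps * Cmod (y - z)).
  set (hh := Cmod (y - z)) in *.
  assert (Hh0 : 0 <= hh) by apply Cmod_ge_0.
  pose proof (Rmin_l (rho - Cmod z) (eps / (Rabs K + 1))) as Hmin1.
  pose proof (Rmin_r (rho - Cmod z) (eps / (Rabs K + 1))) as Hmin2.
  fold delta in Hmin1, Hmin2.
  assert (Hh1 : hh <= rho - Cmod z) by lra.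
  assert (Hh2 : hh * (Rabs K + 1) <= eps).
  { pose proof (Rabs_pos K).
    apply Rmult_le_reg_r with (/ (Rabs K + 1)); [apply Rinv_0_lt_compat; lra |].
    rewrite Rmult_assoc, Rinv_r by lra. unfold Rdiv in *. lra. }
  assert (Hy1 : Cmod y <= rho).
  { replace y with (z + (y - z))%C by ring. eapply Rle_trans; [apply Cmod_triangle |].
    fold hh. lra. }
  eapply Rle_trans; [apply (HK z y g); [lra | exact Hy1 | exact Hg] |]. fold hh.
  assert (Hprod : hh * (hh * (Rabs K + 1)) <= hh * eps) by (apply Rmult_le_compat_l; lra).
  assert (HKabs : K * hh ^ 2 <= Rabs K * hh ^ 2) by (apply Rmult_le_compat_r; [nra | apply Rle_abs]).
  nra.
Qed.

Lemma pseries_derivative (z : C) : Cmod z < 1 ->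
  exists g, is_series (fun n => INR (S n) * a (S n) * z ^ n)%C g /\
    is_derive (K := C_AbsRing) (V := C_NormedModule) f z g.
Proof.
  intros Hz. destruct (ex_series_pseries_deriv z Hz) as [g Hg].
  exists g. split; [exact Hg | exact (is_derive_pseries z g Hz Hg)].
Qed.

End ComplexPowerSeries.

(** * Averaging over roots of unity *)

Definition root_unity (N : nat) : C := (cos (2 * PI / INR N), sin (2 * PI / INR N)).

Lemma root_unity_pow (N k : nat) :
  (root_unity N ^ k)%C = (cos (2 * PI * INR k / INR N), sin (2 * PI * INR k / INR N)).
Proof.
  induction k as [|k IH].
  - simpl. replace (2 * PI * 0 / INR N) with 0 by (unfold Rdiv; ring).
    rewrite cos_0, sin_0. reflexivity.
  - rewrite Cpow_S, IH. unfold root_unity. rewrite S_INR.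
    replace (2 * PI * (INR k + 1) / INR N) with (2 * PI / INR N + 2 * PI * INR k / INR N)
      by (unfold Rdiv; ring).
    rewrite cos_plus, sin_plus. apply injective_projections; simpl; ring.
Qed.

Lemma Cmod_root_unity (N : nat) : Cmod (root_unity N) = 1.
Proof.
  unfold root_unity, Cmod. simpl. pose proof (sin2_cos2 (2 * PI / INR N)). unfold Rsqr in *.
  transitivity (sqrt 1); [f_equal; nra | apply sqrt_1].
Qed.

Lemma root_unity_pow_N (N : nat) : (0 < N)%nat -> (root_unity N ^ N)%C = 1%C.
Proof.
  intros HN. rewrite root_unity_pow. assert (0 < INR N) by (apply lt_0_INR; lia).
  replace (2 * PI * INR N / INR N) with (2 * PI) by (field; lra).
  rewrite cos_2PI, sin_2PI. reflexivity.
Qed.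

Lemma root_unity_pow_neq1 (N e : nat) : (0 < e < N)%nat -> (root_unity N ^ e)%C <> 1%C.
Proof.
  intros He Heq. rewrite root_unity_pow in Heq. apply (f_equal fst) in Heq. simpl in Heq.
  assert (HN : 0 < INR N) by (apply lt_0_INR; lia).
  assert (Hlt : INR e < INR N) by (apply lt_INR; lia).
  assert (He0 : 0 < INR e) by (apply lt_0_INR; lia).
  pose proof PI_RGT_0.
  set (th := PI * INR e / INR N).
  assert (Hth : 0 < th < PI).
  { unfold th. split; [apply Rdiv_lt_0_compat; nra |]. apply Rlt_div_l; nra. }
  replace (2 * PI * INR e / INR N) with (2 * th) in Heq by (unfold th, Rdiv; ring).
  rewrite cos_2a_sin in Heq. pose proof (sin_gt_0 th (proj1 Hth) (proj2 Hth)). nra.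
Qed.

Lemma root_unity_pow_mod (N e : nat) : (0 < N)%nat ->
  (root_unity N ^ e)%C = (root_unity N ^ (e mod N))%C.
Proof.
  intros HN. rewrite (Nat.div_mod e N) at 1 by lia.
  rewrite Cpow_add_r, Cpow_mult_r, root_unity_pow_N, Cpow_1_l by assumption. ring.
Qed.

Lemma sum_n_Cconst (x : C) (n : nat) : sum_n (fun _ => x) n = (INR (S n) * x)%C.
Proof.
  induction n as [|n IH].
  - rewrite sum_O. simpl. Cring.
  - rewrite sum_Sn, IH. change (plus ?u ?v) with (Cplus u v).
    rewrite (S_INR (S n)), RtoC_plus. Cring.
Qed.

Definition dvd_ind (N e : nat) : C := if Nat.eqb (e mod N) 0 then 1%C else 0%C.

Lemma sum_root_unity_pow (N e : nat) : (0 < N)%nat ->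
  sum_n (fun k => ((root_unity N ^ k) ^ e)%C) (N - 1) = (INR N * dvd_ind N e)%C.
Proof.
  intros HN. set (x := (root_unity N ^ e)%C).
  rewrite (sum_n_ext _ (fun k => (x ^ k)%C)).
  2:{ intros k. unfold x. rewrite <- !Cpow_mult_r. f_equal. lia. }
  unfold dvd_ind. destruct (Nat.eqb_spec (e mod N) 0) as [H0 | H0].
  - assert (Hx : x = 1%C) by (unfold x; rewrite root_unity_pow_mod, H0 by assumption; reflexivity).
    rewrite (sum_n_ext (G := C_AbelianMonoid) _ (fun _ => RtoC 1)) by (intros k; rewrite Hx; apply Cpow_1_l).
    rewrite sum_n_Cconst. now replace (S (N - 1)) with N by lia.
  - assert (Hx : (x - 1)%C <> 0%C).
    { intros E. apply (root_unity_pow_neq1 N (e mod N)).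
      + split; [lia | apply Nat.mod_upper_bound; lia].
      + rewrite <- root_unity_pow_mod by assumption. fold x.
        replace x with ((x - 1) + 1)%C by ring. rewrite E. ring. }
    assert (HxN : (x ^ N)%C = 1%C).
    { unfold x. rewrite <- Cpow_mult_r, Nat.mul_comm, Cpow_mult_r, root_unity_pow_N
        by assumption. apply Cpow_1_l. }
    pose proof (Cgeom_sum x (N - 1)) as G. replace (S (N - 1)) with N in G by lia.
    rewrite HxN in G. replace (1 - 1)%C with (RtoC 0) in G by ring.
    destruct (Ceq_dec (sum_n (fun k => (x ^ k)%C) (N - 1)) 0) as [Hs | Hs].
    + rewrite Hs. Cring.
    + exfalso. exact (Cmult_neq_0 _ _ Hx Hs G).
Qed.

Lemma dvd_ind_shift (N m j l : nat) : (m + 2 < N)%nat -> (j <= 2)%nat -> (l <= 2)%nat ->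
  dvd_ind N (m + j + (N - 1) * l) = if Nat.eqb (m + j) l then 1%C else 0%C.
Proof.
  intros Hm Hj Hl. unfold dvd_ind.
  destruct (Compare_dec.le_lt_dec l (m + j)) as [Hle | Hlt].
  - rewrite <- (Nat.mod_unique (m + j + (N - 1) * l) N l (m + j - l)); [| lia |].
    + destruct (Nat.eqb_spec (m + j - l) 0); destruct (Nat.eqb_spec (m + j) l); auto; lia.
    + destruct l as [|[|[|l]]]; lia.
  - rewrite <- (Nat.mod_unique (m + j + (N - 1) * l) N (l - 1) (N + (m + j) - l)); [| lia |].
    + destruct (Nat.eqb_spec (N + (m + j) - l) 0); destruct (Nat.eqb_spec (m + j) l); auto; lia.
    + destruct l as [|[|[|l]]]; lia.
Qed.

Lemma sum_n_2 (F : nat -> C) : sum_n F 2 = (F 0%nat + F 1%nat + F 2%nat)%C.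
Proof. rewrite !sum_Sn, sum_O. reflexivity. Qed.

Definition quad_poly (v : nat -> C) (Z : C) : C := sum_n (fun j => (v j * Z ^ j)%C) 2.

(* [avg_coef N v m = (1/N) sum_k w_k^m |quad_poly v w_k|^2] over the [N]-th roots of
   unity [w_k] (lemma [sum_root_unity_quad_poly]); the exponent [(N - 1) * l] encodes
   [Cconj (w_k ^ l) = w_k ^ ((N - 1) * l)]. *)
Definition avg_coef (N : nat) (v : nat -> C) (m : nat) : C :=
  sum_n (fun j => sum_n (fun l => (v j * Cconj (v l) * dvd_ind N (m + j + (N - 1) * l))%C) 2) 2.

Lemma avg_coef_0 (N : nat) (v : nat -> C) : (2 < N)%nat ->
  avg_coef N v 0 = (v 0%nat * Cconj (v 0%nat) + v 1%nat * Cconj (v 1%nat) + v 2%nat * Cconj (v 2%nat))%C.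
Proof.
  intros HN. unfold avg_coef. rewrite !sum_n_2, !dvd_ind_shift by lia. simpl. Cring.
Qed.

Lemma avg_coef_1 (N : nat) (v : nat -> C) : (3 < N)%nat ->
  avg_coef N v 1 = (v 0%nat * Cconj (v 1%nat) + v 1%nat * Cconj (v 2%nat))%C.
Proof.
  intros HN. unfold avg_coef. rewrite !sum_n_2, !dvd_ind_shift by lia. simpl. Cring.
Qed.

Lemma avg_coef_2 (N : nat) (v : nat -> C) : (4 < N)%nat -> avg_coef N v 2 = (v 0%nat * Cconj (v 2%nat))%C.
Proof.
  intros HN. unfold avg_coef. rewrite !sum_n_2, !dvd_ind_shift by lia. simpl. Cring.
Qed.

Lemma avg_coef_mid (N : nat) (v : nat -> C) (m : nat) : (3 <= m)%nat -> (m + 2 < N)%nat -> avg_coef N v m = 0%C.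
Proof.
  intros H1 H2. unfold avg_coef. rewrite !sum_n_2, !dvd_ind_shift by lia.
  repeat match goal with |- context [Nat.eqb ?x ?y] => destruct (Nat.eqb_spec x y); [lia |] end.
  Cring.
Qed.

Lemma Cmod_avg_coef_le (N : nat) (v : nat -> C) (m : nat) :
  Cmod (avg_coef N v m) <= (Cmod (v 0%nat) + Cmod (v 1%nat) + Cmod (v 2%nat)) ^ 2.
Proof.
  assert (Hterm : forall j l, Cmod (v j * Cconj (v l) * dvd_ind N (m + j + (N - 1) * l))%C
                              <= Cmod (v j) * Cmod (v l)).
  { intros j l. rewrite !Cmod_mult, Cmod_conj.
    assert (Cmod (dvd_ind N (m + j + (N - 1) * l)) <= 1).
    { unfold dvd_ind. destruct (Nat.eqb _ _); rewrite ?Cmod_1, ?Cmod_0; lra. }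
    pose proof (Cmod_ge_0 (v j)). pose proof (Cmod_ge_0 (v l)).
    pose proof (Cmod_ge_0 (dvd_ind N (m + j + (N - 1) * l))).
    assert (0 <= Cmod (v j) * Cmod (v l)) by nra. nra. }
  assert (Hadd : forall x y : C, forall s t, Cmod x <= s -> Cmod y <= t -> Cmod (x + y)%C <= s + t).
  { intros x y s t Hx Hy. eapply Rle_trans; [apply Cmod_triangle | lra]. }
  unfold avg_coef. rewrite !sum_n_2.
  eapply Rle_trans; [repeat apply Hadd; apply Hterm |]. right. ring.
Qed.

Lemma sum_n_Cmult_l (x : C) (u : nat -> C) (n : nat) :
  sum_n (fun k => (x * u k)%C) n = (x * sum_n u n)%C.
Proof. exact (sum_n_mult_l x u n). Qed.

Lemma quad_poly_sqr_expand (N m : nat) (v : nat -> C) (Z : C) (r : R) :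
  (0 < N)%nat -> Cmod Z = 1 -> (Z ^ N)%C = 1%C ->
  ((RtoC r * Z) ^ m * (quad_poly v Z * Cconj (quad_poly v Z)))%C =
  (RtoC (r ^ m) * sum_n (fun j => sum_n (fun l =>
     (v j * Cconj (v l) * Z ^ (m + j + (N - 1) * l))%C) 2) 2)%C.
Proof.
  intros HN HZ HZN.
  assert (Hconj : Cconj Z = (Z ^ (N - 1))%C).
  { assert (E1 : (Z * Z ^ (N - 1))%C = 1%C).
    { rewrite <- Cpow_S. replace (S (N - 1)) with N by lia. exact HZN. }
    assert (E2 : (Z * Cconj Z)%C = 1%C).
    { rewrite <- Cmod2_conj, HZ. apply injective_projections; simpl; ring. }
    transitivity (Cconj Z * (Z * Z ^ (N - 1)))%C; [rewrite E1; ring |].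
    transitivity ((Z * Cconj Z) * Z ^ (N - 1))%C; [ring | rewrite E2; ring]. }
  unfold quad_poly. rewrite !sum_n_2.
  rewrite !Cplus_conj, !Cmult_conj, !Cpow_conj, Hconj.
  rewrite !Cpow_add_r, !Cpow_mult_r, Cpow_mult_l, <- RtoC_pow. ring.
Qed.

Lemma sum_root_unity_quad_poly (N m : nat) (v : nat -> C) (r : R) : (0 < N)%nat ->
  sum_n (fun k => ((RtoC r * root_unity N ^ k) ^ m *
     (quad_poly v (root_unity N ^ k) * Cconj (quad_poly v (root_unity N ^ k))))%C) (N - 1)
  = (RtoC (r ^ m) * (INR N * avg_coef N v m))%C.
Proof.
  intros HN.
  rewrite (sum_n_ext _ _ _ (fun k => quad_poly_sqr_expand N m v _ r HN
             ltac:(rewrite Cmod_pow, Cmod_root_unity; apply pow1)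
             ltac:(rewrite <- Cpow_mult_r, Nat.mul_comm, Cpow_mult_r, root_unity_pow_N,
                     Cpow_1_l by exact HN; reflexivity))).
  rewrite sum_n_Cmult_l. f_equal.
  rewrite sum_n_switch. unfold avg_coef. rewrite <- sum_n_Cmult_l. apply sum_n_ext. intros j.
  rewrite sum_n_switch. rewrite <- sum_n_Cmult_l. apply sum_n_ext. intros l.
  rewrite sum_n_Cmult_l, sum_root_unity_pow by exact HN. Cring.
Qed.

(** * The Caratheodory-Toeplitz inequality *)

Lemma Re_sum_n_ge0 (x : nat -> C) (n : nat) : (forall k, 0 <= Re (x k)) -> 0 <= Re (sum_n x n).
Proof.
  intros Hx. induction n as [|n IH].
  - rewrite sum_O. apply Hx.
  - rewrite sum_Sn. change (0 <= Re (sum_n x n) + Re (x (S n))). pose proof (Hx (S n)). lra.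
Qed.

Lemma sqrt_in_unit_interval (s : R) : 0 <= s < 1 -> 0 <= sqrt s < 1.
Proof. intros Hs. split; [apply sqrt_pos |]. rewrite <- sqrt_1. apply sqrt_lt_1_alt; lra. Qed.

Section CaratheodoryToeplitz.

Variables (c : nat -> C) (p : C -> C) (r K s : R).
Hypothesis r_pos : 0 < r.
Hypothesis K_ge0 : 0 <= K.
Hypothesis s_bounds : 0 <= s < 1.
Hypothesis c_decay : forall m, Cmod (c m) * r ^ m <= K * s ^ m.
Hypothesis c_0 : c 0%nat = 1%C.
Hypothesis p_series : forall z, Cmod z = r -> is_series (fun m => (c m * z ^ m)%C) (p z).
Hypothesis Re_p_ge0 : forall z, Cmod z = r -> 0 <= Re (p z).

(* Averaging [p (r w) |quad_poly v w|^2 >= 0] over the [N]-th roots of unity [w]. *)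
Lemma avg_series_Re_ge0 (N : nat) (v : nat -> C) : (0 < N)%nat ->
  exists S, is_series (fun m => (c m * RtoC (r ^ m) * avg_coef N v m)%C) S /\ 0 <= Re S.
Proof.
  intros HN.
  set (w := fun k => (root_unity N ^ k)%C).
  set (sq := fun k => (quad_poly v (w k) * Cconj (quad_poly v (w k)))%C).
  assert (Hw : forall k, Cmod (RtoC r * w k)%C = r).
  { intros k. unfold w. rewrite Cmod_mult, Cmod_pow, Cmod_root_unity, pow1, Cmod_R.
    rewrite Rmult_1_r. apply Rabs_pos_eq. lra. }
  assert (Hk : forall k, is_series (fun m => (c m * (RtoC r * w k) ^ m * sq k)%C)
                                   (p (RtoC r * w k) * sq k)%C).
  { intros k. apply (is_series_ext (K := C_AbsRing) (V := C_NormedModule)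
                       (fun m => scal (sq k) (c m * (RtoC r * w k) ^ m)%C)).
    - intros m. Cring.
    - replace (p (RtoC r * w k) * sq k)%C with (scal (sq k) (p (RtoC r * w k))) by Cring.
      apply (is_series_scal_l (K := C_AbsRing) (V := C_NormedModule)), p_series, Hw. }
  assert (HNR : 0 < INR N) by (apply lt_0_INR; exact HN).
  exists (RtoC (/ INR N) * sum_n (fun k => p (RtoC r * w k) * sq k) (N - 1))%C. split.
  - apply (is_series_ext (K := C_AbsRing) (V := C_NormedModule)
             (fun m => scal (RtoC (/ INR N))
                            (sum_n (fun k => c m * (RtoC r * w k) ^ m * sq k) (N - 1))%C)).
    + intros m. change (scal ?x ?y) with (Cmult x y).
      rewrite (sum_n_ext _ (fun k => c m * ((RtoC r * w k) ^ m * sq k))%C) by (intros k; Cring).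
      rewrite sum_n_Cmult_l. unfold w, sq. rewrite sum_root_unity_quad_poly by exact HN.
      transitivity (c m * RtoC (r ^ m) * avg_coef N v m * (RtoC (/ INR N) * RtoC (INR N)))%C;
        [Cring |]. rewrite <- RtoC_mult, Rinv_l by lra. Cring.
    + apply (is_series_scal_l (K := C_AbsRing) (V := C_NormedModule)).
      apply (is_series_sum_n (K := C_AbsRing) (V := C_NormedModule)), Hk.
  - rewrite re_scal_l. apply Rmult_le_pos; [apply Rlt_le, Rinv_0_lt_compat, HNR |].
    apply Re_sum_n_ge0. intros k. unfold sq. rewrite <- Cmod2_conj.
    rewrite re_scal_r. apply Rmult_le_pos; [apply Re_p_ge0, Hw | apply pow2_ge_0].
Qed.

Lemma avg_series_tail_term_le (N m : nat) (v : nat -> C) : (N - 2 <= m)%nat ->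
  Cmod (c m * RtoC (r ^ m) * avg_coef N v m)%C
  <= (Cmod (v 0%nat) + Cmod (v 1%nat) + Cmod (v 2%nat)) ^ 2 * K * sqrt s ^ (N - 2) * sqrt s ^ m.
Proof.
  intros Hm. set (V := Cmod (v 0%nat) + Cmod (v 1%nat) + Cmod (v 2%nat)).
  set (t := sqrt s). pose proof (sqrt_in_unit_interval s s_bounds) as Ht. fold t in Ht.
  assert (Hts : t * t = s) by (apply sqrt_sqrt; lra).
  assert (Htm : 0 <= t ^ m) by (apply pow_le; lra).
  assert (Hsm : s ^ m <= t ^ (N - 2) * t ^ m).
  { rewrite <- Hts, Rpow_mult_distr. apply Rmult_le_compat_r; [exact Htm |].
    replace m with ((N - 2) + (m - (N - 2)))%nat at 1 by lia. rewrite pow_add.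
    assert (t ^ (m - (N - 2)) <= 1) by (rewrite <- (pow1 (m - (N - 2))); apply pow_incr; lra).
    assert (0 <= t ^ (N - 2)) by (apply pow_le; lra). nra. }
  rewrite !Cmod_mult, Cmod_R, Rabs_pos_eq by (apply pow_le; lra).
  pose proof (c_decay m). pose proof (Cmod_avg_coef_le N v m) as Havg. fold V in Havg.
  pose proof (Cmod_ge_0 (avg_coef N v m)).
  assert (0 <= Cmod (c m) * r ^ m) by (apply Rmult_le_pos; [apply Cmod_ge_0 | apply pow_le; lra]).
  apply Rle_trans with (K * s ^ m * V ^ 2); [apply Rmult_le_compat; auto |].
  replace (V ^ 2 * K * t ^ (N - 2) * t ^ m) with (K * V ^ 2 * (t ^ (N - 2) * t ^ m)) by ring.
  replace (K * s ^ m * V ^ 2) with (K * V ^ 2 * s ^ m) by ring.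
  apply Rmult_le_compat_l; [nra | exact Hsm].
Qed.

Lemma toeplitz_form_approx (v : nat -> C) (N : nat) : (5 < N)%nat ->
  - ((Cmod (v 0%nat) + Cmod (v 1%nat) + Cmod (v 2%nat)) ^ 2 * K * sqrt s ^ (N - 2) / (1 - sqrt s))
  <= Re (v 0%nat * Cconj (v 0%nat) + v 1%nat * Cconj (v 1%nat) + v 2%nat * Cconj (v 2%nat)
         + c 1%nat * RtoC r * (v 0%nat * Cconj (v 1%nat) + v 1%nat * Cconj (v 2%nat))
         + c 2%nat * RtoC (r ^ 2) * (v 0%nat * Cconj (v 2%nat)))%C.
Proof.
  intros HN.
  match goal with |- _ <= Re ?x => set (main := x) end.
  set (E := (Cmod (v 0%nat) + Cmod (v 1%nat) + Cmod (v 2%nat)) ^ 2 * K * sqrt s ^ (N - 2)).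
  assert (HE : 0 <= E).
  { apply Rmult_le_pos; [apply Rmult_le_pos; [apply pow2_ge_0 | exact K_ge0] |].
    apply pow_le, sqrt_pos. }
  pose proof (sqrt_in_unit_interval s s_bounds) as Ht.
  destruct (avg_series_Re_ge0 N v ltac:(lia)) as [S [HS HReS]].
  (* the averaged series agrees with the Toeplitz form [main] up to degree [N - 3] *)
  set (u := fun m => if Nat.leb m 2 then (c m * RtoC (r ^ m) * avg_coef N v m)%C else 0%C).
  assert (Hu : is_series u main).
  { replace main with (sum_n u 2).
    - apply (is_series_finite (K := C_AbsRing) (V := C_NormedModule)).
      intros m Hm. unfold u. destruct (Nat.leb_spec m 2); [lia | reflexivity].
    - rewrite sum_n_2. unfold u. simpl Nat.leb. cbv iota.
      rewrite avg_coef_0, avg_coef_1, avg_coef_2, c_0 by lia. unfold main.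
      apply injective_projections; simpl; ring. }
  assert (Hbound : Cmod (S - main)%C <= E * / (1 - sqrt s)).
  { apply (is_series_Cmod_le _ _ _ _
             (is_series_minus (K := C_AbsRing) (V := C_NormedModule) _ _ _ _ HS Hu)
             (is_series_scal_l (K := R_AbsRing) (V := R_NormedModule) E _ _
                (is_series_geom (sqrt s) ltac:(rewrite Rabs_pos_eq; lra)))).
    intros m. change (scal E (sqrt s ^ m)) with (E * sqrt s ^ m).
    change (Cmod (plus ?x (opp ?y))) with (Cmod (x - y)%C).
    assert (0 <= E * sqrt s ^ m) by (apply Rmult_le_pos; [exact HE | apply pow_le; lra]).
    unfold u. destruct (Nat.leb_spec m 2).
    { replace (c m * RtoC (r ^ m) * avg_coef N v m - c m * RtoC (r ^ m) * avg_coef N v m)%C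
        with (RtoC 0) by ring. rewrite Cmod_0. assumption. }
    replace (c m * RtoC (r ^ m) * avg_coef N v m - 0)%C
      with (c m * RtoC (r ^ m) * avg_coef N v m)%C by ring.
    destruct (Compare_dec.le_lt_dec (N - 2) m) as [Hm | Hm].
    - exact (avg_series_tail_term_le N m v Hm).
    - rewrite avg_coef_mid by lia. rewrite Cmult_0_r, Cmod_0. assumption. }
  assert (Hre : Re S - Re main <= Cmod (S - main)%C).
  { replace (Re S - Re main) with (Re (S - main)%C) by (unfold Re; simpl; ring).
    eapply Rle_trans; [apply Rle_abs | apply re_le_Cmod]. }
  unfold Rdiv. lra.
Qed.

Lemma toeplitz_form_nonneg (v : nat -> C) :
  0 <= Re (v 0%nat * Cconj (v 0%nat) + v 1%nat * Cconj (v 1%nat) + v 2%nat * Cconj (v 2%nat)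
           + c 1%nat * RtoC r * (v 0%nat * Cconj (v 1%nat) + v 1%nat * Cconj (v 2%nat))
           + c 2%nat * RtoC (r ^ 2) * (v 0%nat * Cconj (v 2%nat)))%C.
Proof.
  match goal with |- 0 <= Re ?x => set (main := x) end.
  set (A := (Cmod (v 0%nat) + Cmod (v 1%nat) + Cmod (v 2%nat)) ^ 2 * K).
  assert (HA : 0 <= A) by (apply Rmult_le_pos; [apply pow2_ge_0 | exact K_ge0]).
  set (t := sqrt s). pose proof (sqrt_in_unit_interval s s_bounds) as Ht. fold t in Ht.
  destruct (Rle_or_lt 0 (Re main)) as [H | Hneg]; [exact H | exfalso].
  assert (Heps : 0 < - Re main * (1 - t) / (2 * (A + 1))).
  { apply Rdiv_lt_0_compat; [apply Rmult_lt_0_compat |]; lra. }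
  destruct (pow_lt_1_zero t ltac:(rewrite Rabs_pos_eq; lra) _ Heps) as [n0 Hn0].
  pose proof (toeplitz_form_approx v (n0 + 6) ltac:(lia)) as Happrox.
  fold main A t in Happrox.
  pose proof (Hn0 (n0 + 6 - 2)%nat ltac:(lia)) as Hsmall.
  rewrite Rabs_pos_eq in Hsmall by (apply pow_le; lra).
  set (T := t ^ (n0 + 6 - 2)) in *.
  set (X := - Re main * (1 - t) / (2 * (A + 1))) in *.
  assert (HX : (A + 1) * X = - Re main * (1 - t) / 2) by (unfold X; field; lra).
  assert (HT : 0 <= T) by (apply pow_le; lra).
  assert (HAT : A * T / (1 - t) <= - Re main / 2).
  { apply Rmult_le_reg_r with (1 - t); [lra |].
    replace (A * T / (1 - t) * (1 - t)) with (A * T) by (field; lra).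
    replace (- Re main / 2 * (1 - t)) with ((A + 1) * X) by (rewrite HX; field).
    nra. }
  lra.
Qed.

End CaratheodoryToeplitz.

(* With [w = x2 - x1^2/2] and [|eta| = 1], the test vector
   [(1, - conj (conj x1 + eta x1) / 2, conj eta)] gives the value [2 - |x1|^2/2 + Re (eta w)];
   then choose [eta = - conj w / |w|]. *)
Lemma caratheodory_coef_bound (x1 x2 : C) :
  (forall v : nat -> C,
     0 <= Re (v 0%nat * Cconj (v 0%nat) + v 1%nat * Cconj (v 1%nat) + v 2%nat * Cconj (v 2%nat)
              + x1 * (v 0%nat * Cconj (v 1%nat) + v 1%nat * Cconj (v 2%nat))
              + x2 * (v 0%nat * Cconj (v 2%nat)))%C) ->
  Cmod (x2 - x1 * x1 / 2)%C <= 2 - Cmod x1 ^ 2 / 2.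
Proof.
  intros Hform. set (w := (x2 - x1 * x1 / 2)%C).
  assert (Hunit : forall eta : C, Cmod eta = 1 -> 0 <= 2 - Cmod x1 ^ 2 / 2 + Re (eta * w)).
  { intros eta Heta.
    pose proof (Hform (fun j => match j with
                                | O => RtoC 1
                                | 1%nat => (- Cconj (Cconj x1 + eta * x1) / 2)%C
                                | _ => Cconj eta end)) as H.
    cbv beta iota in H.
    assert (He : Re eta ^ 2 + Im eta ^ 2 = 1) by (rewrite <- Cmod2_alt, Heta; ring).
    match type of H with 0 <= Re ?F =>
      replace (Re F) with (1 + (Re eta ^ 2 + Im eta ^ 2) - (Re x1 ^ 2 + Im x1 ^ 2) / 4
                           - (Re eta ^ 2 + Im eta ^ 2) * (Re x1 ^ 2 + Im x1 ^ 2) / 4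
                           + Re (eta * w)) in H end.
    - rewrite He, <- Cmod2_alt in H. lra.
    - unfold w. destruct x1, x2, eta. unfold Re, Im. simpl. field. }
  destruct (Req_dec (Cmod w) 0) as [Hw | Hw].
  - rewrite Hw. apply Cmod_eq_0 in Hw.
    pose proof (Hunit (RtoC 1) Cmod_1) as H. rewrite Hw, Cmult_0_r in H. simpl in H. lra.
  - set (eta := (- Cconj w / RtoC (Cmod w))%C).
    assert (HwC : RtoC (Cmod w) <> 0%C) by (intros E; apply Hw; now injection E).
    assert (Heta : Cmod eta = 1).
    { unfold eta, Cdiv. rewrite Cmod_mult, Cmod_opp, Cmod_conj, Cmod_inv, Cmod_R by exact HwC.
      rewrite Rabs_pos_eq by apply Cmod_ge_0. field. exact Hw. }
    assert (Hew : (eta * w)%C = RtoC (- Cmod w)).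
    { unfold eta. transitivity (- (w * Cconj w) / RtoC (Cmod w))%C; [field; exact HwC |].
      rewrite <- Cmod2_conj, RtoC_opp, RtoC_pow. field. exact HwC. }
    pose proof (Hunit eta Heta) as H. rewrite Hew in H. simpl in H. lra.
Qed.

(** * The class A_beta *)

(* [beta f(z)/z + (1 - beta) f'(z) = sum_m weight beta m * a_(m+1) * z^m] *)
Definition weight (beta : R) (m : nat) : R := 1 + (1 - beta) * INR m.

Lemma weight_ge1 (beta : R) (m : nat) : beta <= 1 -> 1 <= weight beta m.
Proof. intros Hb. unfold weight. pose proof (pos_INR m). nra. Qed.

Lemma is_series_weighted_coef (beta : R) (a : nat -> C) (z fz g : C) :
  a 0%nat = 0%C -> z <> 0%C -> is_pseries a z fz ->
  is_series (fun n => INR (S n) * a (S n) * z ^ n)%C g ->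
  is_series (fun m => RtoC (weight beta m) * a (S m) * z ^ m)%C
            (RtoC beta * (fz / z) + RtoC (1 - beta) * g)%C.
Proof.
  intros Ha0 Hz Hf Hg.
  assert (Hdiv : is_series (fun n => (z ^ n * a (S n))%C) (/ z * (fz - a 0%nat))%C).
  { apply is_pseries_C. apply (is_pseries_decr_1 a z (/ z)%C fz); [| exact Hf].
    exact (Cinv_l z Hz). }
  pose proof (is_series_plus (K := C_AbsRing) (V := C_NormedModule) _ _ _ _
    (is_series_scal_l (K := C_AbsRing) (V := C_NormedModule) (RtoC beta) _ _ Hdiv)
    (is_series_scal_l (K := C_AbsRing) (V := C_NormedModule) (RtoC (1 - beta)) _ _ Hg)) as H.
  replace (RtoC beta * (fz / z) + RtoC (1 - beta) * g)%C
    with (plus (scal (RtoC beta) (/ z * (fz - a 0%nat))%C) (scal (RtoC (1 - beta)) g)).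
  - refine (is_series_ext (K := C_AbsRing) (V := C_NormedModule) _ _ _ _ H).
    intros m. unfold weight. rewrite S_INR, RtoC_plus. apply injective_projections; simpl; ring.
  - rewrite Ha0. change ((RtoC beta * (/ z * (fz - RtoC 0)) + RtoC (1 - beta) * g)
                         = (RtoC beta * (fz / z) + RtoC (1 - beta) * g))%C.
    field. exact Hz.
Qed.

Lemma le_of_forall_sqr_scaled (x y : R) : (forall r, 0 < r < 1 -> r ^ 2 * x <= y) -> x <= y.
Proof.
  intros H. destruct (Rle_or_lt x y) as [Hxy | Hxy]; [exact Hxy | exfalso].
  destruct (Rle_or_lt x 0) as [Hx | Hx].
  - pose proof (H (/ 2) ltac:(lra)). nra.
  - set (t := (x + Rmax y 0) / (2 * x)).
    pose proof (Rmax_l y 0). pose proof (Rmax_r y 0).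
    assert (Ht : 0 < t < 1).
    { unfold t. split; [apply Rdiv_lt_0_compat; lra |].
      apply Rlt_div_l; [lra |]. apply Rmax_case; lra. }
    pose proof (H (sqrt t) ltac:(split; [apply sqrt_lt_R0 | rewrite <- sqrt_1; apply sqrt_lt_1_alt]; lra))
      as Ht'.
    rewrite <- Rsqr_pow2, Rsqr_sqrt in Ht' by lra.
    replace (t * x) with ((x + Rmax y 0) / 2) in Ht' by (unfold t; field; lra). lra.
Qed.

Section ClassA.

Variables (beta : R) (f : C -> C) (a : nat -> C).
Hypothesis beta_01 : 0 <= beta <= 1.
Hypothesis f_in_A : in_A beta f a.

Let c (m : nat) : C := (RtoC (weight beta m) * a (S m))%C.
Let p (z : C) : C := (RtoC beta * (f z / z) + RtoC (1 - beta) * C_derive f z)%C.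

Lemma in_A_caratheodory_series (z : C) : in_disk z -> z <> 0%C ->
  is_series (fun m => c m * z ^ m)%C (p z) /\ 0 < Re (p z).
Proof.
  intros Hz Hz0. destruct f_in_A as (Ha0 & _ & Hf & Hpos).
  destruct (pseries_derivative a f Hf z Hz) as (g & Hg & Hdg).
  destruct (Hpos z Hz Hz0) as (df & Hdf & Hre).
  assert (Hp : p z = (RtoC beta * (f z / z) + RtoC (1 - beta) * df)%C).
  { unfold p. now rewrite (is_C_derive_unique f z df Hdf). }
  assert (Hdfg : df = g).
  { rewrite <- (is_C_derive_unique f z df Hdf). exact (is_C_derive_unique f z g Hdg). }
  rewrite Hp. split; [| exact Hre].
  rewrite Hdfg. exact (is_series_weighted_coef beta a z (f z) g Ha0 Hz0 (Hf z Hz) Hg).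
Qed.

Lemma in_A_coef_bound_radial (r : R) : 0 < r < 1 ->
  r ^ 2 * Cmod (weight beta 2 * a 3%nat - weight beta 1 ^ 2 * a 2%nat * a 2%nat / 2)%C
  <= 2 - weight beta 1 ^ 2 * Cmod (a 2%nat) ^ 2 * r ^ 2 / 2.
Proof.
  intros Hr. destruct f_in_A as (_ & Ha1 & Hf & _).
  destruct (pseries_deriv_coef_geom_bound a f Hf r Hr) as (K & s & HK & Hs & Hdecay).
  assert (Hc : forall m, Cmod (c m) * r ^ m <= K * s ^ m).
  { intros m. eapply Rle_trans; [| apply Hdecay]. unfold c.
    pose proof (weight_ge1 beta m (proj2 beta_01)).
    rewrite Cmod_mult, Cmod_R, Rabs_pos_eq by lra.
    apply Rmult_le_compat_r; [apply pow_le; lra |].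
    apply Rmult_le_compat_r; [apply Cmod_ge_0 |].
    unfold weight. rewrite S_INR. pose proof (pos_INR m). nra. }
  assert (Hc0 : c 0%nat = 1%C).
  { unfold c, weight. rewrite Ha1. simpl. rewrite Rmult_0_r, Rplus_0_r. ring. }
  assert (Hcircle : forall z, Cmod z = r -> in_disk z /\ z <> 0%C).
  { intros z Hz. split; [unfold in_disk; lra |].
    intros E. rewrite E, Cmod_0 in Hz. lra. }
  pose proof (caratheodory_coef_bound (c 1%nat * RtoC r) (c 2%nat * RtoC (r ^ 2))
    (toeplitz_form_nonneg c p r K s (proj1 Hr) HK Hs Hc Hc0
       (fun z Hz => proj1 (in_A_caratheodory_series z (proj1 (Hcircle z Hz)) (proj2 (Hcircle z Hz))))
       (fun z Hz => Rlt_le _ _ (proj2 (in_A_caratheodory_series z (proj1 (Hcircle z Hz))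
                                                             (proj2 (Hcircle z Hz))))))) as H.
  unfold c in H.
  replace (weight beta 2 * a 3%nat * RtoC (r ^ 2)
           - weight beta 1 * a 2%nat * RtoC r * (weight beta 1 * a 2%nat * RtoC r) / 2)%C
    with (RtoC (r ^ 2) * (weight beta 2 * a 3%nat - weight beta 1 ^ 2 * a 2%nat * a 2%nat / 2))%C
    in H by (rewrite !RtoC_pow; field).
  pose proof (weight_ge1 beta 1 (proj2 beta_01)).
  rewrite !Cmod_mult, !Cmod_R, !Rabs_pos_eq in H by (try apply pow_le; lra).
  replace (weight beta 1 ^ 2 * Cmod (a 2%nat) ^ 2 * r ^ 2) with ((weight beta 1 * Cmod (a 2%nat) * r) ^ 2)
    by ring. exact H.
Qed.

End ClassA.

Lemma in_A_coef_bound (beta : R) (f : C -> C) (a : nat -> C) :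
  0 <= beta <= 1 -> in_A beta f a ->
  Cmod (weight beta 2 * a 3%nat - weight beta 1 ^ 2 * a 2%nat * a 2%nat / 2)%C
  + weight beta 1 ^ 2 * Cmod (a 2%nat) ^ 2 / 2 <= 2.
Proof.
  intros Hb Hf. apply le_of_forall_sqr_scaled. intros r Hr.
  pose proof (in_A_coef_bound_radial beta f a Hb Hf r Hr). lra.
Qed.

Lemma logcoef_gap_le (beta g2 al u : R) :
  0 <= beta <= 1 -> 0 <= al ->
  u + (2 - beta) ^ 2 * al ^ 2 / 2 <= 2 ->
  g2 - al ^ 2 * (1 - beta) ^ 2 / (4 * (3 - 2 * beta)) <= u / (2 * (3 - 2 * beta)) ->
  g2 - al / 2 <= 1 / (3 - 2 * beta).
Proof.
  intros Hb Hal Hu Hup.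
  set (A := 2 - beta) in *. set (B := 3 - 2 * beta) in *.
  assert (HB : 1 <= B) by (unfold B; lra).
  replace ((1 - beta) ^ 2) with (A ^ 2 - B) in Hup by (unfold A, B; ring).
  assert (u / (2 * B) + al ^ 2 * (A ^ 2 - B) / (4 * B) <= 1 / B - al ^ 2 / 4).
  { apply Rmult_le_reg_r with (4 * B); [lra |].
    replace ((u / (2 * B) + al ^ 2 * (A ^ 2 - B) / (4 * B)) * (4 * B))
      with (2 * u + al ^ 2 * (A ^ 2 - B)) by (field; lra).
    replace ((1 / B - al ^ 2 / 4) * (4 * B)) with (4 - al ^ 2 * B) by (field; lra).
    nra. }
  nra.
Qed.

Lemma logcoef_gap_ge (beta g2 al u : R) :
  0 <= beta <= 1 -> 0 <= g2 -> 0 <= al ->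
  u + (2 - beta) ^ 2 * al ^ 2 / 2 <= 2 ->
  - (u / (2 * (3 - 2 * beta))) <= g2 - al ^ 2 * (1 - beta) ^ 2 / (4 * (3 - 2 * beta)) ->
  - (1 / sqrt (5 - 6 * beta + 2 * beta ^ 2)) <= g2 - al / 2.
Proof.
  intros Hb Hg2 Hal Hu Hlo.
  set (A := 2 - beta) in *. set (B := 3 - 2 * beta) in *.
  assert (HB : 1 <= B) by (unfold B; lra).
  replace ((1 - beta) ^ 2) with (A ^ 2 - B) in Hlo by (unfold A, B; ring).
  set (D := 5 - 6 * beta + 2 * beta ^ 2).
  assert (HD : D = 2 * A ^ 2 - B) by (unfold D, A, B; ring).
  assert (HD1 : 1 <= D) by (unfold D; nra).
  set (sg := sqrt D).
  assert (Hsg2 : sg * sg = D) by (apply sqrt_sqrt; lra).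
  assert (Hsg : 0 < sg) by (apply sqrt_lt_R0; lra).
  assert (HBsg : B <= 2 * sg) by (assert (B * B <= 4 * D) by (unfold D, B; nra); nra).
  set (v := al / 2).
  (* [g2] is bounded below both by [0] and by the quadratic [(D v^2 - 1) / B] in [v = al / 2] *)
  assert (Hquad : v ^ 2 * D / B - 1 / B <= al ^ 2 * (A ^ 2 - B) / (4 * B) - u / (2 * B)).
  { rewrite HD. unfold v.
    apply Rmult_le_reg_r with (4 * B); [lra |].
    replace (((al / 2) ^ 2 * (2 * A ^ 2 - B) / B - 1 / B) * (4 * B))
      with (al ^ 2 * (2 * A ^ 2 - B) - 4) by (field; lra).
    replace ((al ^ 2 * (A ^ 2 - B) / (4 * B) - u / (2 * B)) * (4 * B))
      with (al ^ 2 * (A ^ 2 - B) - 2 * u) by (field; lra).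
    nra. }
  destruct (Rle_or_lt (v * sg) 1) as [Hv | Hv].
  - assert (v <= 1 / sg).
    { apply Rmult_le_reg_r with sg; [exact Hsg |]. replace (1 / sg * sg) with 1 by (field; lra). lra. }
    lra.
  - assert (Hfac : 0 <= (sg * v - 1) * (sg * sg * v + sg - B)) by (apply Rmult_le_pos; nra).
    assert (- (1 / sg) <= v ^ 2 * D / B - 1 / B - v).
    { apply Rmult_le_reg_r with (B * sg); [nra |].
      replace (- (1 / sg) * (B * sg)) with (- B) by (field; lra).
      replace ((v ^ 2 * D / B - 1 / B - v) * (B * sg)) with (v ^ 2 * D * sg - sg - v * B * sg)
        by (field; lra).
      rewrite <- Hsg2. nra. }
    lra.
Qed.

Lemma in_A_logcoef_bounds (beta : R) (f : C -> C) (a : nat -> C) :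
  0 <= beta <= 1 -> in_A beta f a ->
  - (1 / sqrt (5 - 6 * beta + 2 * beta ^ 2)) <= Cmod (gamma2 a) - Cmod (gamma1 a)
  /\ Cmod (gamma2 a) - Cmod (gamma1 a) <= 1 / (3 - 2 * beta).
Proof.
  intros Hb Hf. pose proof (in_A_coef_bound beta f a Hb Hf) as Hcoef.
  replace (weight beta 1) with (2 - beta) in Hcoef by (unfold weight; simpl; ring).
  replace (weight beta 2) with (3 - 2 * beta) in Hcoef by (unfold weight; simpl; ring).
  set (B := 3 - 2 * beta) in *. assert (HB : 1 <= B) by (unfold B; lra).
  set (w := (RtoC B * a 3%nat - RtoC (2 - beta) ^ 2 * a 2%nat * a 2%nat / 2)%C) in *.
  set (k := (1 - beta) ^ 2 / (4 * B)).
  assert (Hk : 0 <= k) by (apply Rdiv_le_0_compat; [apply pow2_ge_0 | lra]).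
  assert (Hg1 : Cmod (gamma1 a) = Cmod (a 2%nat) / 2).
  { unfold gamma1. rewrite Cmod_div, Cmod_R, Rabs_pos_eq by (try injection; lra). reflexivity. }
  assert (Hg2 : (gamma2 a - a 2%nat * a 2%nat * k)%C = (w * RtoC (/ (2 * B)))%C).
  { unfold gamma2, w, k, B. apply injective_projections; simpl; field; lra. }
  assert (Hgap : Rabs (Cmod (gamma2 a) - Cmod (a 2%nat) ^ 2 * k) <= Cmod w / (2 * B)).
  { pose proof (norm_triangle_inv (V := C_NormedModule) (gamma2 a) (a 2%nat * a 2%nat * k)%C) as H.
    change (Rabs (Cmod (gamma2 a) - Cmod (a 2%nat * a 2%nat * k)%C)
            <= Cmod (gamma2 a - a 2%nat * a 2%nat * k)%C) in H.
    assert (0 < / (2 * B)) by (apply Rinv_0_lt_compat; lra).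
    rewrite Hg2, !Cmod_mult, !Cmod_R, (Rabs_pos_eq k), (Rabs_pos_eq (/ (2 * B))) in H by lra.
    replace (Cmod (a 2%nat) * Cmod (a 2%nat) * k) with (Cmod (a 2%nat) ^ 2 * k) in H by ring.
    exact H. }
  replace (Cmod (a 2%nat) ^ 2 * k) with (Cmod (a 2%nat) ^ 2 * (1 - beta) ^ 2 / (4 * B)) in Hgap
    by (unfold k; field; lra).
  apply Rabs_le_between in Hgap. rewrite Hg1. split.
  - exact (logcoef_gap_ge beta _ _ (Cmod w) Hb (Cmod_ge_0 _) (Cmod_ge_0 _) Hcoef (proj1 Hgap)).
  - exact (logcoef_gap_le beta _ _ (Cmod w) Hb (Cmod_ge_0 _) Hcoef (proj2 Hgap)).
Qed.

(** * Extremal functions *)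

Definition pseries_sum (a : nat -> C) (z : C) : C := epsilon (inhabits (RtoC 0)) (is_pseries a z).

Lemma is_pseries_sum (a : nat -> C) (z : C) : ex_pseries a z -> is_pseries a z (pseries_sum a z).
Proof. intros [l Hl]. exact (epsilon_spec _ _ (ex_intro _ l Hl)). Qed.

Lemma is_pseries_sum_of_bounded (a : nat -> C) (M : R) (z : C) :
  (forall n, Cmod (a n) <= M) -> Cmod z < 1 -> is_pseries a z (pseries_sum a z).
Proof.
  intros Ha Hz. apply is_pseries_sum.
  destruct (ex_series_le (K := C_AbsRing) (V := C_CompleteNormedModule)
              (fun n => (z ^ n * a n)%C) (fun n => M * Cmod z ^ n)) as [l Hl].
  - intros n. change (norm ?x) with (Cmod x). rewrite Cmod_mult, Cmod_pow.
    pose proof (Ha n). assert (0 <= Cmod z ^ n) by (apply pow_le, Cmod_ge_0). nra.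
  - apply (ex_series_scal_l (K := R_AbsRing) (V := R_NormedModule)), ex_series_geom.
    rewrite Rabs_pos_eq; [exact Hz | apply Cmod_ge_0].
  - exists l. apply is_pseries_C, Hl.
Qed.

Lemma Re_inv_1_minus_gt (q : C) : Cmod q < 1 -> 1 / 2 < Re (/ (1 - q))%C.
Proof.
  intros Hq. destruct q as [x y].
  assert (H2 : x ^ 2 + y ^ 2 < 1).
  { pose proof (Cmod_ge_0 (x, y)). assert (Hsq : Cmod (x, y) ^ 2 < 1) by nra.
    rewrite Cmod2_alt in Hsq. exact Hsq. }
  unfold Re, Cinv. simpl.
  set (d := (1 + - x) * ((1 + - x) * 1) + (0 + - y) * ((0 + - y) * 1)).
  assert (Hd : 0 < d) by (unfold d; nra).
  apply Rmult_lt_reg_r with d; [exact Hd |].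
  replace ((1 + - x) / d * d) with (1 + - x) by (field; lra).
  unfold d. nra.
Qed.

Definition caratheodory_coef (u v : C) (m : nat) : C :=
  match m with O => RtoC 1 | _ => (u ^ m + v ^ m)%C end.

Lemma is_series_caratheodory_coef (u v z : C) : Cmod (u * z)%C < 1 -> Cmod (v * z)%C < 1 ->
  is_series (fun m => caratheodory_coef u v m * z ^ m)%C (/ (1 - u * z) + / (1 - v * z) - 1)%C.
Proof.
  intros Hu Hv.
  pose proof (is_series_finite (K := C_AbsRing) (V := C_NormedModule)
                (fun n => match n with O => RtoC 1 | _ => RtoC 0 end) 0
                ltac:(intros [|m] Hm; [lia | reflexivity])) as H1.
  rewrite sum_O in H1.
  pose proof (is_series_minus (K := C_AbsRing) (V := C_NormedModule) _ _ _ _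
    (is_series_plus (K := C_AbsRing) (V := C_NormedModule) _ _ _ _
       (is_series_Cgeom _ Hu) (is_series_Cgeom _ Hv)) H1) as H.
  refine (is_series_ext (K := C_AbsRing) (V := C_NormedModule) _ _ _ _ H).
  intros [|m].
  - change ((u * z) ^ 0 + (v * z) ^ 0 - 1 = 1 * z ^ 0)%C. simpl. ring.
  - unfold caratheodory_coef. rewrite !Cpow_mult_l. Cring.
Qed.

(* Taylor coefficients of the extremal functions:
   [beta f(z)/z + (1 - beta) f'(z) = 1/(1 - u z) + 1/(1 - v z) - 1]. *)
Definition extremal_coef (beta : R) (u v : C) (n : nat) : C :=
  match n with O => RtoC 0 | S m => (caratheodory_coef u v m / weight beta m)%C end.

Lemma Cmod_extremal_coef_le (beta : R) (u v : C) (n : nat) :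
  beta <= 1 -> Cmod u = 1 -> Cmod v = 1 -> Cmod (extremal_coef beta u v n) <= 2.
Proof.
  intros Hb Hu Hv. destruct n as [|m]; [simpl; rewrite Cmod_0; lra |].
  pose proof (weight_ge1 beta m Hb).
  assert (Hc : Cmod (caratheodory_coef u v m) <= 2).
  { destruct m; simpl; [rewrite Cmod_1; lra |].
    eapply Rle_trans; [apply Cmod_triangle |]. rewrite !Cmod_mult, !Cmod_pow, Hu, Hv, !pow1. lra. }
  pose proof (Cmod_ge_0 (caratheodory_coef u v m)).
  simpl. rewrite Cmod_div, Cmod_R, Rabs_pos_eq.
  - apply Rle_trans with (Cmod (caratheodory_coef u v m)); [| exact Hc].
    apply Rmult_le_reg_r with (weight beta m); [lra |].
    unfold Rdiv. rewrite Rmult_assoc, Rinv_l by lra. nra.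
  - lra.
  - intros E. apply (f_equal fst) in E. simpl in E. lra.
Qed.

Lemma extremal_in_A (beta : R) (u v : C) : 0 <= beta <= 1 -> Cmod u = 1 -> Cmod v = 1 ->
  in_A beta (pseries_sum (extremal_coef beta u v)) (extremal_coef beta u v).
Proof.
  intros Hb Hu Hv. set (a := extremal_coef beta u v). set (f := pseries_sum a).
  assert (Hf : forall z, Cmod z < 1 -> is_pseries a z (f z)).
  { intros z. apply (is_pseries_sum_of_bounded a 2).
    intros n. exact (Cmod_extremal_coef_le beta u v n (proj2 Hb) Hu Hv). }
  split; [reflexivity |]. split.
  { unfold a. simpl. replace (weight beta 0) with 1 by (unfold weight; simpl; ring).
    apply injective_projections; simpl; field. }
  split; [exact Hf |].
  intros z Hz Hz0. unfold in_disk in Hz.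
  destruct (pseries_derivative a f Hf z Hz) as (g & Hg & Hdg).
  exists g. split; [exact Hdg |].
  pose proof (is_series_weighted_coef beta a z (f z) g eq_refl Hz0 (Hf z Hz) Hg) as Hp.
  assert (Hp' : is_series (fun m => caratheodory_coef u v m * z ^ m)%C
                  (RtoC beta * (f z / z) + RtoC (1 - beta) * g)%C).
  { refine (is_series_ext (K := C_AbsRing) (V := C_NormedModule) _ _ _ _ Hp).
    intros m. unfold a. simpl. field.
    intros E. apply (f_equal fst) in E. simpl in E. pose proof (weight_ge1 beta m (proj2 Hb)). lra. }
  assert (Huz : Cmod (u * z)%C < 1) by (rewrite Cmod_mult, Hu; lra).
  assert (Hvz : Cmod (v * z)%C < 1) by (rewrite Cmod_mult, Hv; lra).
  rewrite (is_series_C_unique _ _ _ Hp' (is_series_caratheodory_coef u v z Huz Hvz)).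
  pose proof (Re_inv_1_minus_gt _ Huz). pose proof (Re_inv_1_minus_gt _ Hvz).
  change (0 < Re (/ (1 - u * z))%C + Re (/ (1 - v * z))%C - 1). lra.
Qed.

Lemma extremal_coef_2 (beta : R) (u v : C) :
  extremal_coef beta u v 2 = ((u + v) / RtoC (2 - beta))%C.
Proof.
  unfold extremal_coef, caratheodory_coef. rewrite !Cpow_1_r.
  now replace (weight beta 1) with (2 - beta) by (unfold weight; simpl; ring).
Qed.

Lemma extremal_coef_3 (beta : R) (u v : C) :
  extremal_coef beta u v 3 = ((u * u + v * v) / RtoC (3 - 2 * beta))%C.
Proof.
  unfold extremal_coef, caratheodory_coef. simpl. rewrite !Cmult_1_r.
  now replace (weight beta 2) with (3 - 2 * beta) by (unfold weight; simpl; ring).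
Qed.

Lemma logcoef_upper_bound_attained (beta : R) : 0 <= beta <= 1 ->
  exists (f : C -> C) (a : nat -> C), in_A beta f a /\
    Cmod (gamma2 a) - Cmod (gamma1 a) = 1 / (3 - 2 * beta).
Proof.
  intros Hb. set (a := extremal_coef beta (RtoC 1) (RtoC (-1))).
  exists (pseries_sum a), a. split.
  - apply extremal_in_A; [exact Hb | apply Cmod_1 |].
    rewrite Cmod_R, Rabs_left; lra.
  - assert (E1 : gamma1 a = RtoC 0).
    { unfold gamma1, a. rewrite extremal_coef_2. apply injective_projections; simpl; field; lra. }
    assert (E2 : gamma2 a = RtoC (1 / (3 - 2 * beta))).
    { unfold gamma2, a. rewrite extremal_coef_2, extremal_coef_3.
      apply injective_projections; simpl; field; lra. }
    rewrite E1, E2, Cmod_0, Cmod_R, Rabs_pos_eq by (apply Rdiv_le_0_compat; lra). ring.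
Qed.

Lemma gamma2_extremal_coef_conj (beta x y : R) : 0 <= beta <= 1 -> x * x + y * y = 1 ->
  x * x * (5 - 6 * beta + 2 * beta ^ 2) = (2 - beta) ^ 2 ->
  gamma2 (extremal_coef beta (x, y) (x, - y)) = RtoC 0.
Proof.
  intros Hb Hxy Hx. unfold gamma2. rewrite extremal_coef_2, extremal_coef_3.
  assert (Hsum : ((x, y) + (x, (- y)%R))%C = RtoC (2 * x))
    by (apply injective_projections; simpl; ring).
  assert (Hsq : ((x, y) * (x, y) + (x, (- y)%R) * (x, (- y)%R))%C = RtoC (2 * (2 * (x * x) - 1)))
    by (apply injective_projections; simpl; nra).
  assert (Hre : 2 * (2 * (x * x) - 1) / (3 - 2 * beta) - 2 * x / (2 - beta) * (2 * x / (2 - beta)) / 2 = 0).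
  { apply Rmult_eq_reg_r with ((3 - 2 * beta) * (2 - beta) ^ 2); [| nra].
    field_simplify; [nra | lra ..]. }
  rewrite Hsum, Hsq.
  transitivity (RtoC ((2 * (2 * (x * x) - 1) / (3 - 2 * beta)
                       - 2 * x / (2 - beta) * (2 * x / (2 - beta)) / 2) / 2));
    [apply injective_projections; simpl; field; lra | rewrite Hre; f_equal; field].
Qed.

Lemma logcoef_lower_bound_attained (beta : R) : 0 <= beta <= 1 ->
  exists (f : C -> C) (a : nat -> C), in_A beta f a /\
    Cmod (gamma2 a) - Cmod (gamma1 a) = - (1 / sqrt (5 - 6 * beta + 2 * beta ^ 2)).
Proof.
  intros Hb. set (D := 5 - 6 * beta + 2 * beta ^ 2).
  assert (HD : 1 <= D) by (unfold D; nra).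
  set (sg := sqrt D).
  assert (Hsg2 : sg * sg = D) by (apply sqrt_sqrt; lra).
  assert (Hsg : 0 < sg) by (apply sqrt_lt_R0; lra).
  (* [u, v = x +- i y] on the unit circle with [x = (2 - beta) / sqrt D] make [gamma2] vanish *)
  set (x := (2 - beta) / sg).
  assert (Hxx : x * x * D = (2 - beta) ^ 2) by (rewrite <- Hsg2; unfold x; field; lra).
  assert (Hx1 : x * x <= 1) by (unfold D in *; nra).
  set (y := sqrt (1 - x * x)).
  assert (Hyy : y * y = 1 - x * x) by (apply sqrt_sqrt; lra).
  assert (Hunit : forall t : R, t * t = y * y -> Cmod (x, t) = 1).
  { intros t Ht. unfold Cmod. simpl. transitivity (sqrt 1); [f_equal; nra | apply sqrt_1]. }
  set (a := extremal_coef beta (x, y) (x, - y)).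
  exists (pseries_sum a), a. split.
  - apply extremal_in_A; [exact Hb | apply Hunit; ring | apply Hunit; ring].
  - assert (E1 : gamma1 a = RtoC (1 / sg)).
    { unfold gamma1, a. rewrite extremal_coef_2.
      apply injective_projections; simpl; unfold x; field; lra. }
    rewrite E1. unfold a. rewrite (gamma2_extremal_coef_conj beta x y Hb ltac:(lra) Hxx), Cmod_0, Cmod_R, Rabs_pos_eq
      by (apply Rdiv_le_0_compat; lra).
    ring.
Qed.

Theorem theorem4p1 (beta : R) (hb0 : 0 <= beta) (hb1 : beta <= 1) :
  (forall (f : C -> C) (a : nat -> C), in_A beta f a ->
     - (1 / sqrt (5 - 6 * beta + 2 * beta ^ 2)) <= Cmod (gamma2 a) - Cmod (gamma1 a)
     /\ Cmod (gamma2 a) - Cmod (gamma1 a) <= 1 / (3 - 2 * beta))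
  /\ (exists (f : C -> C) (a : nat -> C), in_A beta f a /\
        Cmod (gamma2 a) - Cmod (gamma1 a) = 1 / (3 - 2 * beta))
  /\ (exists (f : C -> C) (a : nat -> C), in_A beta f a /\
        Cmod (gamma2 a) - Cmod (gamma1 a) = - (1 / sqrt (5 - 6 * beta + 2 * beta ^ 2))).
Proof.
  assert (Hb : 0 <= beta <= 1) by lra.
  split; [| split].
  - intros f a Hf. exact (in_A_logcoef_bounds beta f a Hb Hf).
  - exact (logcoef_upper_bound_attained beta Hb).
  - exact (logcoef_lower_bound_attained beta Hb).
Qed.
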